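(* For an integer $j\ge 2$ let $\bar\alpha_j$ be the largest $\alpha\ge 0$ such that $\left(1-e^{-\alpha^{j-1}x^{j-1}}\right)^{j-1}\le x$ for all $x\in(0,1]$, and for $\delta\in(0,1)$ let $\gamma_0(j,\delta)=\bar\alpha_j^{-(j-1)/j}\,j\,\delta^{-1/j}$. Then for every $\delta\in(0,e^{-1})$, choosing $j=\lceil\ln(1/\delta)\rceil$ gives $$\gamma_0(j,\delta)\le e\,\left\lceil \ln\tfrac{1}{\delta}\right\rceil .$$
   Context: $\gamma_0(j,\delta)$ is the minimum oversampling ratio (number of measurements divided by number of nonzero signal entries) for LM1 reconstruction with $(j,k)$-regular LDPC measurement matrices at sparsity fraction $\delta$. *)

From Stdlib Require Import Reals.
Open Scope R_scope.

Definition alpha_admissible (j : nat) (alpha : R) : Prop :=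
  0 <= alpha /\
  forall x : R, 0 < x <= 1 ->
    (1 - exp (- (alpha ^ (j - 1) * x ^ (j - 1)))) ^ (j - 1) <= x.

Definition is_alpha_bar (j : nat) (abar : R) : Prop :=
  alpha_admissible j abar /\ (forall alpha, alpha_admissible j alpha -> alpha <= abar).

Definition gamma0 (j : nat) (abar delta : R) : R :=
  Rpower abar (- (INR j - 1) / INR j) * INR j * Rpower delta (- 1 / INR j).

(* - The exponent factor: the constant alpha = 1 is admissible for every
     j >= 2, because with y = x^(j-1) <= x one has 0 <= 1 - e^(-y) <= y <= x
     and raising a number in [0,1] to a positive power does not increase it.
     Hence the largest admissible constant satisfies abar >= 1, and so
     abar^(-(j-1)/j) <= 1.
   - The delta factor: delta^(-1/j) = exp(ln(1/delta) / j) <= e as soon as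
     ln(1/delta) <= j, which is exactly the ceiling condition.

   Finally delta < 1/e gives ln(1/delta) > 1, so its ceiling j is at least 2,
   which is what the admissibility of alpha = 1 requires. *)

From Stdlib Require Import Reals Lra Lia.
Open Scope R_scope.

Lemma exp_le_exp (x y : R) : x <= y -> exp x <= exp y.
Proof.
  intros [Hlt | ->]; [left; apply exp_increasing, Hlt | lra].
Qed.

Lemma pow_le_self (x : R) (n : nat) : 0 <= x <= 1 -> (1 <= n)%nat -> x ^ n <= x.
Proof.
  intros Hx Hn. induction n as [|n IH]; [lia|].
  destruct n as [|n]; [simpl; lra|].
  assert (IHn : x ^ S n <= x) by (apply IH; lia).
  assert (0 <= x ^ S n) by (apply pow_le; lra).
  change (x ^ S (S n)) with (x * x ^ S n). nra.
Qed.

(* For y >= 0, 1 - e^(-y) lies in [0, y]: the tangent-line bound for exp. *)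
Lemma one_minus_exp_neg_bounds (y : R) : 0 <= y -> 0 <= 1 - exp (- y) <= y.
Proof.
  intros Hy. split.
  - assert (exp (- y) <= exp 0) by (apply exp_le_exp; lra).
    rewrite exp_0 in *. lra.
  - pose proof (exp_ineq1_le (- y)). lra.
Qed.

Lemma one_admissible (j : nat) : (2 <= j)%nat -> alpha_admissible j 1.
Proof.
  intros Hj. split; [lra|]. intros x Hx.
  rewrite pow1, Rmult_1_l.
  assert (Hy : x ^ (j - 1) <= x) by (apply pow_le_self; [lra|lia]).
  assert (Hy0 : 0 <= x ^ (j - 1)) by (apply pow_le; lra).
  pose proof (one_minus_exp_neg_bounds (x ^ (j - 1)) Hy0) as Hb.
  eapply Rle_trans; [apply pow_le_self; [lra|lia] | lra].
Qed.

Lemma alpha_bar_ge_1 (j : nat) (abar : R) :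
  (2 <= j)%nat -> is_alpha_bar j abar -> 1 <= abar.
Proof.
  intros Hj [_ Hmax]. apply Hmax, one_admissible, Hj.
Qed.

Lemma Rpower_nonpos_le_1 (a p : R) : 1 <= a -> p <= 0 -> Rpower a p <= 1.
Proof.
  intros Ha Hp. rewrite <- (Rpower_O a) by lra. apply Rle_Rpower; assumption.
Qed.

Lemma Rpower_neg_inv_le_e (delta n : R) :
  0 < delta -> 0 < n -> ln (1 / delta) <= n -> Rpower delta (- 1 / n) <= exp 1.
Proof.
  intros Hd Hn Hln. unfold Rpower. apply exp_le_exp.
  assert (Hinv : ln (1 / delta) = - ln delta).
  { unfold Rdiv. rewrite Rmult_1_l. apply ln_Rinv, Hd. }
  replace (- 1 / n * ln delta) with (ln (1 / delta) / n) by (rewrite Hinv; field; lra).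
  apply Rmult_le_reg_r with n; [exact Hn|].
  unfold Rdiv. rewrite Rmult_assoc, Rinv_l by lra. lra.
Qed.

Lemma ln_inv_gt_1 (delta : R) : 0 < delta < exp (-1) -> 1 < ln (1 / delta).
Proof.
  intros [Hd0 Hd1].
  rewrite <- (ln_exp 1) at 1. apply ln_increasing; [apply exp_pos|].
  replace (-1) with (- (1)) in Hd1 by ring. rewrite exp_Ropp in Hd1.
  assert (Hinv : / / exp 1 < / delta) by (apply Rinv_lt_contravar; [nra | exact Hd1]).
  rewrite Rinv_inv in Hinv. unfold Rdiv. lra.
Qed.

Theorem corollary2 (delta : R) (j : nat) (abar : R) :
  0 < delta < exp (-1) ->
  (* j = ceil(ln(1/delta)) *)
  INR j - 1 < ln (1 / delta) <= INR j ->
  is_alpha_bar j abar ->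
  gamma0 j abar delta <= exp 1 * INR j.
Proof.
  intros Hdelta [_ Hceil] Hbar.
  pose proof (ln_inv_gt_1 delta Hdelta) as Hln.
  assert (Hj : (2 <= j)%nat).
  { destruct j as [|[|j]]; simpl in Hceil; [lra | lra | lia]. }
  assert (HJ : 2 <= INR j) by (apply (le_INR 2), Hj).
  assert (Hexp_factor : Rpower abar (- (INR j - 1) / INR j) <= 1).
  { apply Rpower_nonpos_le_1; [exact (alpha_bar_ge_1 j abar Hj Hbar)|].
    assert (0 < / INR j) by (apply Rinv_0_lt_compat; lra).
    unfold Rdiv. nra. }
  assert (Hdelta_factor : Rpower delta (- 1 / INR j) <= exp 1)
    by (apply Rpower_neg_inv_le_e; [apply Hdelta | lra | exact Hceil]).
  unfold gamma0.
  set (A := Rpower abar _) in *. set (B := Rpower delta _) in *.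
  assert (HB : 0 <= B) by (left; apply exp_pos).
  assert (HAB : A * B <= exp 1).
  { apply Rle_trans with (1 * B); [apply Rmult_le_compat_r | ]; lra. }
  replace (A * INR j * B) with (A * B * INR j) by ring.
  apply Rmult_le_compat_r; lra.
Qed.
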